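(* Let $f:A\to B$ be a ring homomorphism, $\mathfrak b$ an ideal of $B$, and $A\bowtie^f\mathfrak b:=\{(a,f(a)+b): a\in A,\ b\in\mathfrak b\}\subseteq A\times B$. For a maximal ideal $\mathfrak m$ of $A$ let $S_{\mathfrak m}:=f(A\setminus\mathfrak m)+\mathfrak b$, $\mathfrak b_{S_{\mathfrak m}}:=\mathfrak bB_{S_{\mathfrak m}}$, and $f_{\mathfrak m}:A_{\mathfrak m}\to B_{S_{\mathfrak m}}$ the ring homomorphism induced by $f$ ($a/s\mapsto f(a)/f(s)$). Assume that for every maximal ideal $\mathfrak m$ of $A$ containing $f^{-1}(\mathfrak b)$, either $f_{\mathfrak m}$ is surjective or $f^{-1}(\mathfrak b)A_{\mathfrak m}\neq\{0\}$. Then the following are equivalent: (i) $A\bowtie^f\mathfrak b$ is an arithmetical ring; (ii) $A$ is an arithmetical ring, $\mathfrak b_{S_{\mathfrak m}}=\{0\}$ for every maximal ideal $\mathfrak m$ of $A$ containing $f^{-1}(\mathfrak b)$, and for every maximal ideal $\mathfrak n$ of $B$ not containing $\mathfrak b$ the set of all ideals of $B_{\mathfrak n}$ is totally ordered by inclusion.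
   Context: All rings are commutative with identity. $S_{\mathfrak m}$ is a multiplicative subset of $B$ and $B_{S_{\mathfrak m}}$ the localization (possibly zero). A ring is arithmetical if every finitely generated ideal is locally principal. *)

From HB Require Import structures.
From mathcomp Require Import all_boot all_algebra generic_quotient.
From mathcomp Require Import boolp.
From mathcomp Require Import ring.
Set Implicit Arguments. Unset Strict Implicit. Unset Printing Implicit Defensive.
Import GRing.Theory.
Local Open Scope ring_scope.
Local Open Scope quotient_scope.

Definition mulclos (R : comPzRingType) (S : R -> Prop) (x : R) : Prop :=
  exists s : seq R, (forall y, y \in s -> S y) /\ x = \prod_(y <- s) y.

Section Localization.
Variables (R : comPzRingType) (S : R -> Prop).

Definition Smc : pred R := fun x => `[< mulclos S x >].

Lemma Smc1 : Smc 1.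
Proof. by apply/asboolP; exists [::]; rewrite big_nil. Qed.

Lemma SmcM x y : Smc x -> Smc y -> Smc (x * y).
Proof.
move=> /asboolP [s [Hs ->]] /asboolP [t [Ht ->]]; apply/asboolP.
exists (s ++ t); split; last by rewrite big_cat.
by move=> z; rewrite mem_cat => /orP [/Hs|/Ht].
Qed.

Definition frac := {p : R * R | Smc p.2}.
Definition fnum (x : frac) := (val x).1.
Definition fden (x : frac) := (val x).2.
Lemma fdenP (x : frac) : Smc (fden x). Proof. exact: valP x. Qed.

Definition fequiv (x y : frac) : bool :=
  `[< exists2 u, Smc u & u * (fnum x * fden y - fnum y * fden x) = 0 >].

Lemma fequiv_is_equiv : equiv_class_of fequiv.
Proof.
split=> [x|x y|y x z].
- by apply/asboolP; exists 1; [exact: Smc1|ring].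
- apply/asboolP/asboolP => -[u Hu E]; exists u => //;
  by rewrite -[LHS]opprK -mulrN opprB E oppr0.
- move=> /asboolP [u Hu E1] /asboolP [v Hv E2]; apply/asboolP.
  exists (u * v * fden y); first by rewrite !SmcM ?fdenP.
  have -> : u * v * fden y * (fnum x * fden z - fnum z * fden x) =
    v * fden z * (u * (fnum x * fden y - fnum y * fden x)) +
    u * fden x * (v * (fnum y * fden z - fnum z * fden y)) by ring.
  by rewrite E1 E2 !mulr0 addr0.
Qed.

Canonical fequiv_equiv := EquivRelPack fequiv_is_equiv.
Canonical fequiv_encModRel := defaultEncModRel fequiv.

Definition localization := {eq_quot fequiv}.
HB.instance Definition _ : EqQuotient frac fequiv localization :=
  EqQuotient.on localization.
HB.instance Definition _ := Choice.on localization.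

Definition mkfrac a s (hs : Smc s) : frac := exist _ (a, s) hs.
Definition fzero : frac := mkfrac 0 Smc1.
Definition fone : frac := mkfrac 1 Smc1.
Definition fopp (x : frac) : frac := mkfrac (- fnum x) (fdenP x).
Definition fadd (x y : frac) : frac :=
  mkfrac (fnum x * fden y + fnum y * fden x) (SmcM (fdenP x) (fdenP y)).
Definition fmul (x y : frac) : frac :=
  mkfrac (fnum x * fnum y) (SmcM (fdenP x) (fdenP y)).

Lemma fequivE x y : fequiv x y = (x == y %[mod localization]).
Proof. by rewrite piE. Qed.

Lemma fequiv_repr x : fequiv x (repr (\pi_localization x)).
Proof. by rewrite fequivE reprK. Qed.

Lemma pi_eq x y : fnum x * fden y = fnum y * fden x ->
  \pi_localization x = \pi_localization y.
Proof.
move=> E; apply/eqP; rewrite piE; apply/asboolP; exists 1; first exact: Smc1.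
by rewrite E subrr mulr0.
Qed.

Definition lzero : localization := lift_cst localization fzero.
Definition lone : localization := lift_cst localization fone.
Definition lopp := lift_op1 localization fopp.
Definition ladd := lift_op2 localization fadd.
Definition lmul := lift_op2 localization fmul.
Canonical pi_lzero_morph := PiConst lzero.
Canonical pi_lone_morph := PiConst lone.

Lemma pi_lopp : {morph \pi : x / fopp x >-> lopp x}.
Proof.
move=> x; unlock lopp; apply/eqP; rewrite piE.
have /asboolP [u Hu E] := fequiv_repr x; apply/asboolP; exists u => //.
rewrite /fopp /fnum /fden /=; rewrite /fnum /fden in E.
set a := (val x).1 in E *; set s := (val x).2 in E *.
set a' := (val _).1 in E *; set s' := (val _).2 in E *.
have -> : u * (- a * s' - - a' * s) = - (u * (a * s' - a' * s)) by ring.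
by rewrite E oppr0.
Qed.
Canonical pi_lopp_morph := PiMorph1 pi_lopp.

Lemma pi_ladd : {morph \pi : x y / fadd x y >-> ladd x y}.
Proof.
move=> x y; unlock ladd; apply/eqP; rewrite piE.
set x' := repr _; set y' := repr _.
have /asboolP [u Hu E1] := fequiv_repr x.
have /asboolP [v Hv E2] := fequiv_repr y.
fold x' in E1; fold y' in E2.
apply/asboolP; exists (u * v); first exact: SmcM.
rewrite /fadd /fnum /fden /=; rewrite /fnum /fden in E1 E2.
have -> : u * v * (((val x).1 * (val y).2 + (val y).1 * (val x).2) *
     ((val x').2 * (val y').2) -
   ((val x').1 * (val y').2 + (val y').1 * (val x').2) * ((val x).2 * (val y).2)) =
   v * (val y).2 * (val y').2 * (u * ((val x).1 * (val x').2 - (val x').1 * (val x).2)) +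
   u * (val x).2 * (val x').2 * (v * ((val y).1 * (val y').2 - (val y').1 * (val y).2))
  by ring.
by rewrite E1 E2 !mulr0 addr0.
Qed.
Canonical pi_ladd_morph := PiMorph2 pi_ladd.

Lemma pi_lmul : {morph \pi : x y / fmul x y >-> lmul x y}.
Proof.
move=> x y; unlock lmul; apply/eqP; rewrite piE.
set x' := repr _; set y' := repr _.
have /asboolP [u Hu E1] := fequiv_repr x.
have /asboolP [v Hv E2] := fequiv_repr y.
fold x' in E1; fold y' in E2.
apply/asboolP; exists (u * v); first exact: SmcM.
rewrite /fmul /fnum /fden /=; rewrite /fnum /fden in E1 E2.
have -> : u * v * ((val x).1 * (val y).1 * ((val x').2 * (val y').2) -
   (val x').1 * (val y').1 * ((val x).2 * (val y).2)) =
   v * (val y).1 * (val y').2 * (u * ((val x).1 * (val x').2 - (val x').1 * (val x).2)) +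
   u * (val x').1 * (val x).2 * (v * ((val y).1 * (val y').2 - (val y').1 * (val y).2))
  by ring.
by rewrite E1 E2 !mulr0 addr0.
Qed.
Canonical pi_lmul_morph := PiMorph2 pi_lmul.

Lemma laddA : associative ladd.
Proof.
move=> x y z; rewrite -[x]reprK -[y]reprK -[z]reprK !piE.
by apply: pi_eq; rewrite /fadd /fmul /fopp /fzero /fone /mkfrac /fnum /fden /=; ring.
Qed.
Lemma laddC : commutative ladd.
Proof.
move=> x y; rewrite -[x]reprK -[y]reprK !piE.
by apply: pi_eq; rewrite /fadd /fmul /fopp /fzero /fone /mkfrac /fnum /fden /=; ring.
Qed.
Lemma ladd0 : left_id lzero ladd.
Proof.
move=> x; rewrite -[x]reprK !piE.
by apply: pi_eq; rewrite /fadd /fmul /fopp /fzero /fone /mkfrac /fnum /fden /=; ring.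
Qed.
Lemma laddN : left_inverse lzero lopp ladd.
Proof.
move=> x; rewrite -[x]reprK !piE.
by apply: pi_eq; rewrite /fadd /fmul /fopp /fzero /fone /mkfrac /fnum /fden /=; ring.
Qed.

HB.instance Definition _ := GRing.isZmodule.Build localization laddA laddC ladd0 laddN.

Lemma lmulA : associative lmul.
Proof.
move=> x y z; rewrite -[x]reprK -[y]reprK -[z]reprK !piE.
by apply: pi_eq; rewrite /fadd /fmul /fopp /fzero /fone /mkfrac /fnum /fden /=; ring.
Qed.
Lemma lmulC : commutative lmul.
Proof.
move=> x y; rewrite -[x]reprK -[y]reprK !piE.
by apply: pi_eq; rewrite /fadd /fmul /fopp /fzero /fone /mkfrac /fnum /fden /=; ring.
Qed.
Lemma lmul1 : left_id lone lmul.
Proof.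
move=> x; rewrite -[x]reprK !piE.
by apply: pi_eq; rewrite /fadd /fmul /fopp /fzero /fone /mkfrac /fnum /fden /=; ring.
Qed.
Lemma lmulDl : left_distributive lmul ladd.
Proof.
move=> x y z; rewrite -[x]reprK -[y]reprK -[z]reprK !piE.
by apply: pi_eq; rewrite /fadd /fmul /fopp /fzero /fone /mkfrac /fnum /fden /=; ring.
Qed.

HB.instance Definition _ := GRing.Zmodule_isComPzRing.Build localization
  lmulA lmulC lmul1 lmulDl.

Definition locmap (a : R) : localization := \pi_localization (mkfrac a Smc1).

End Localization.

(* (If f(s) is not an admissible denominator -- which never happens when f  *)
(* maps the denominators of SA into the multiplicative closure of SB -- a    *)
(* junk value 0 is used.)                                                   *)
Definition locind (A B : comPzRingType) (f : A -> B) (SA : A -> Prop)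
  (SB : B -> Prop) (x : localization SA) : localization SB :=
  \pi_(localization SB)
    (insubd (fzero SB) (f (fnum (repr x)), f (fden (repr x)))).

Definition is_ideal (R : comPzRingType) (I : R -> Prop) : Prop :=
  [/\ I 0, (forall x y, I x -> I y -> I (x + y)) & (forall a x, I x -> I (a * x))].

Definition maximal_ideal (R : comPzRingType) (m : R -> Prop) : Prop :=
  [/\ is_ideal m, ~ m 1 &
      forall J : R -> Prop, is_ideal J -> (forall x, m x -> J x) ->
        J 1 \/ (forall x, J x -> m x)].

Definition ideal_gen (R : comPzRingType) (X : R -> Prop) (x : R) : Prop :=
  forall J : R -> Prop, is_ideal J -> (forall y, X y -> J y) -> J x.

Definition fin_gen (R : comPzRingType) (I : R -> Prop) : Prop :=
  exists s : seq R, forall x, I x <-> ideal_gen (fun y => y \in s) x.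

Definition principal (R : comPzRingType) (I : R -> Prop) : Prop :=
  exists g : R, forall x, I x <-> exists r, x = r * g.

Definition ext_ideal (R : comPzRingType) (S : R -> Prop) (I : R -> Prop) :
  localization S -> Prop :=
  ideal_gen (fun y => exists2 x, I x & y = locmap S x).

Arguments ext_ideal {R} S I _.
Arguments locind {A B} f SA SB x.

Definition compl (R : Type) (m : R -> Prop) : R -> Prop := fun x => ~ m x.

Definition locally_principal (R : comPzRingType) (I : R -> Prop) : Prop :=
  forall m : R -> Prop, maximal_ideal m -> principal (ext_ideal (compl m) I).

Definition arithmetical (R : comPzRingType) : Prop :=
  forall I : R -> Prop, is_ideal I -> fin_gen I -> locally_principal I.

Record ideal_of (R : comPzRingType) := IdealOf {
  ideal_set :> R -> Prop;
  ideal_ofP : is_ideal ideal_set }.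

Section Amalgamation.
Variables (A B : comPzRingType) (f : {rmorphism A -> B}) (b : ideal_of B).

Definition amalgP : pred (A * B) := fun p => `[< b (p.2 - f p.1) >].

Lemma amalg_closed : subring_closed amalgP.
Proof.
have [b0 bD bM] := ideal_ofP b.
have bN x : b x -> b (- x) by move=> /(bM (-1)); rewrite mulN1r.
split; rewrite /amalgP.
- by apply/asboolP; rewrite /= rmorph1 subrr.
- move=> x y /asboolP hx /asboolP hy; apply/asboolP => /=.
  have -> : x.2 - y.2 - f (x.1 - y.1) = (x.2 - f x.1) + - (y.2 - f y.1).
    by rewrite rmorphB; ring.
  exact: bD (bN _ hy).
- move=> x y /asboolP hx /asboolP hy; apply/asboolP => /=.
  have -> : x.2 * y.2 - f (x.1 * y.1) = y.2 * (x.2 - f x.1) + f x.1 * (y.2 - f y.1).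
    by rewrite rmorphM; ring.
  exact: bD (bM _ _ hx) (bM _ _ hy).
Qed.

Definition amalgamation := {p : A * B | amalgP p}.
HB.instance Definition _ := [isSub for @proj1_sig (A * B) amalgP : amalgamation -> A * B].
HB.instance Definition _ := [Choice of amalgamation by <:].
HB.instance Definition _ :=
  GRing.SubChoice_isSubComPzRing.Build _ _ amalgamation amalg_closed.

End Amalgamation.

Definition Sm (A B : comPzRingType) (f : {rmorphism A -> B}) (b : B -> Prop)
  (m : A -> Prop) : B -> Prop :=
  fun y => exists2 a, ~ m a & exists2 c, b c & y = f a + c.

(* A ring is arithmetical iff it is locally a chain ring: for every maximal
   ideal m and all x, y, one of x, y divides the other in R_m ([chain_at m]).
   A maximal ideal of A ⋈^f b either contains 0 × b, and then lies over a
   maximal ideal m of A, or it does not, and then lies over a maximal ideal n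
   of B not containing b, with the same local divisibility as B_n.  Over m,
   comparing (0, c) with (k, 0) for c in b and f k in b shows that c is killed
   by S_m or k by A \ m; under the hypothesis on f_m this gives b_{S_m} = 0.
   Conversely, if b_{S_m} = 0 or f^{-1}(b) is not contained in m, then every
   element of the localization equals its diagonal part (a, f a), so
   divisibility is decided in A_m. *)

From Pilot Require Import Defs.
From HB Require Import structures.
From mathcomp Require Import all_boot all_algebra generic_quotient boolp.
From mathcomp Require Import ring.
Set Implicit Arguments. Unset Strict Implicit. Unset Printing Implicit Defensive.
Import GRing.Theory.
Local Open Scope ring_scope.
Local Open Scope quotient_scope.

Section Ideals.
Variable R : comPzRingType.
Implicit Types (X I J m : R -> Prop) (x y : R).

Lemma ideal_gen_is_ideal X : is_ideal (ideal_gen X).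
Proof.
split=> [J [] //|x y Hx Hy J HJ HX|a x Hx J HJ HX]; case: (HJ) => _ JD JM.
- by apply: JD; [apply: Hx|apply: Hy].
- by apply: JM; apply: Hx.
Qed.

Lemma mem_ideal_gen X x : X x -> ideal_gen X x.
Proof. by move=> Xx J _; apply. Qed.

Lemma ideal_gen_min X J x : is_ideal J -> (forall y, X y -> J y) ->
  ideal_gen X x -> J x.
Proof. by move=> HJ XJ; apply. Qed.

Definition mults (w : R) : R -> Prop := fun z => exists r, z = r * w.

Lemma is_ideal_mults w : is_ideal (mults w).
Proof.
split; first by exists 0; rewrite mul0r.
- by move=> _ _ [r ->] [r' ->]; exists (r + r'); rewrite mulrDl.
- by move=> a _ [r ->]; exists (a * r); rewrite mulrA.
Qed.

Lemma mults_id w : mults w w.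
Proof. by exists 1; rewrite mul1r. Qed.

Section IdealClosure.
Variable I : R -> Prop.
Hypothesis hI : is_ideal I.

Lemma ideal0 : I 0. Proof. by case: hI. Qed.
Lemma idealD x y : I x -> I y -> I (x + y). Proof. by case: hI => _ + _; apply. Qed.
Lemma idealMl a x : I x -> I (a * x). Proof. by case: hI => _ _; apply. Qed.
Lemma idealMr a x : I x -> I (x * a). Proof. by rewrite mulrC; apply: idealMl. Qed.
Lemma idealN x : I x -> I (- x). Proof. by move=> /(idealMl (-1)); rewrite mulN1r. Qed.
Lemma idealB x y : I x -> I y -> I (x - y).
Proof. by move=> Ix /idealN; apply: idealD. Qed.

End IdealClosure.

Lemma maximal_idealP m : is_ideal m -> ~ m 1 ->
  maximal_ideal m <-> forall x, ~ m x -> exists r, m (1 - r * x).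
Proof.
move=> Hm m1; split=> [[_ _ mmax] x mx|Hcomax].
  pose J z := exists r, m (z - r * x).
  have HJ : is_ideal J.
    split; first by exists 0; rewrite mul0r subr0; apply: ideal0.
    - move=> y z [r Hr] [s Hs]; exists (r + s).
      by rewrite (_ : _ - _ = (y - r * x) + (z - s * x)); [apply: idealD|ring].
    - move=> a y [r Hr]; exists (a * r).
      by rewrite (_ : _ - _ = a * (y - r * x)); [apply: idealMl|ring].
  case: (mmax J HJ) => [y my|//|/(_ x) mJ]; first by exists 0; rewrite mul0r subr0.
  by case: mx; apply: mJ; exists 1; rewrite mul1r subrr; apply: ideal0.
split=> // J HJ mJ; case: (pselect (forall x, J x -> m x)) => [|/existsNP]; first by right.
move=> [x /not_implyP [Jx mx]]; left; have [r mr] := Hcomax x mx.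
by rewrite -(subrK (r * x) 1); apply: idealD => //; [apply: mJ|apply: idealMl].
Qed.

Lemma maximal_prime m x y : maximal_ideal m -> m (x * y) -> m x \/ m y.
Proof.
move=> Hm mxy; case: (pselect (m x)) => mx; [by left|right].
case: (Hm) => Im m1 _.
have [r mr] := (maximal_idealP Im m1).1 Hm x mx.
rewrite (_ : y = (1 - r * x) * y + r * (x * y)); last by ring.
by apply: idealD => //; [apply: idealMr|apply: idealMl].
Qed.

Lemma Smc_mem (S : R -> Prop) x : S x -> Smc S x.
Proof.
move=> Sx; apply/asboolP; exists [:: x]; rewrite big_seq1; split=> // y.
by rewrite inE => /eqP ->.
Qed.

Lemma Smc_closed (S : R -> Prop) x : S 1 -> (forall y z, S y -> S z -> S (y * z)) ->
  Smc S x -> S x.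
Proof.
move=> S1 SM /asboolP [s [Hs ->]]; elim: s Hs => [|y s IH] Hs; first by rewrite big_nil.
rewrite big_cons; apply: SM; first by apply: Hs; rewrite inE eqxx.
by apply: IH => z zs; apply: Hs; rewrite inE zs orbT.
Qed.

Lemma Smc_compl m x : maximal_ideal m -> Smc (compl m) x <-> ~ m x.
Proof.
move=> Hm; split; last exact: Smc_mem.
apply: Smc_closed; first by case: Hm.
by move=> y z my mz /(maximal_prime Hm) [].
Qed.

End Ideals.

Lemma is_ideal_preim (T U : comPzRingType) (g : {rmorphism T -> U}) (J : U -> Prop) :
  is_ideal J -> is_ideal (fun x => J (g x)).
Proof.
move=> HJ; split=> [|x y|a x]; rewrite ?rmorph0 ?rmorphD ?rmorphM.
- exact: ideal0.
- exact: idealD.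
- exact: idealMl.
Qed.

Ltac unfold_frac := rewrite /fadd /fmul /fopp /fzero /fone /mkfrac /fnum /fden /=.

Section Localization.
Variables (R : comPzRingType) (S : R -> Prop).
Local Notation L := (localization S).
Implicit Types (x y : R) (p q : Defs.frac S).

Lemma pi1 : (1 : L) = \pi_L (fone S). Proof. by rewrite /GRing.one /=; unlock lone. Qed.
Lemma pi0 : (0 : L) = \pi_L (fzero S). Proof. by rewrite /GRing.zero /=; unlock lzero. Qed.
Lemma piM p q : \pi_L p * \pi_L q = \pi_L (fmul p q). Proof. exact: (esym (pi_lmul _ _)). Qed.
Lemma piD p q : \pi_L p + \pi_L q = \pi_L (fadd p q). Proof. exact: (esym (pi_ladd _ _)). Qed.
Lemma piN p : - \pi_L p = \pi_L (fopp p). Proof. exact: (esym (pi_lopp _)). Qed.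

Lemma pi_eqP p q : \pi_L p = \pi_L q <->
  exists2 u, Smc S u & u * (fnum p * fden q - fnum q * fden p) = 0.
Proof.
split=> [/eqP|H]; first by rewrite -fequivE => /asboolP.
by apply/eqP; rewrite -fequivE; apply/asboolP.
Qed.

Fact locmap_is_zmod_morphism : zmod_morphism (locmap S).
Proof. by move=> x y; rewrite /locmap piN piD; apply: pi_eq; unfold_frac; ring. Qed.

Fact locmap_is_monoid_morphism : monoid_morphism (locmap S).
Proof.
by split=> [|x y]; rewrite /locmap ?pi1 ?piM; apply: pi_eq; unfold_frac; ring.
Qed.

HB.instance Definition _ :=
  GRing.isZmodMorphism.Build R L (locmap S) locmap_is_zmod_morphism.
HB.instance Definition _ :=
  GRing.isMonoidMorphism.Build R L (locmap S) locmap_is_monoid_morphism.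

Lemma locmap_eq0 x : locmap S x = 0 <-> exists2 u, Smc S u & u * x = 0.
Proof.
rewrite pi0 /locmap pi_eqP; unfold_frac.
by split=> -[u Su E]; exists u; rewrite // ?mulr1 ?mul0r ?subr0 in E *.
Qed.

(* [t * num q = r * num p] makes [\pi q] the multiple [r den p / (t den q)] of [\pi p]. *)
Lemma pi_dvd p q t r : Smc S t -> t * fnum q = r * fnum p ->
  exists z, \pi_L q = z * \pi_L p.
Proof.
move=> St E; exists (\pi_L (mkfrac (r * fden p) (SmcM St (fdenP q)))).
rewrite piM; apply: pi_eq; move: E; unfold_frac => E.
by transitivity (t * (sval q).1 * ((sval q).2 * (sval p).2)); [ring|rewrite E; ring].
Qed.

Lemma locmap_dvdP x y : (exists z, locmap S y = z * locmap S x) <->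
  exists t r, Smc S t /\ t * y = r * x.
Proof.
split=> [|[t [r [St E]]]]; last first.
  exact: (pi_dvd (p := mkfrac x (Smc1 S)) (q := mkfrac y (Smc1 S)) St E).
move=> [z]; rewrite -[z]reprK /locmap piM => /pi_eqP [u Su]; unfold_frac => E.
exists (u * fden (repr z)), (u * fnum (repr z)); split; first exact: SmcM (fdenP _).
by apply/eqP; rewrite -subr_eq0 -E; apply/eqP; rewrite /fnum /fden; ring.
Qed.

Lemma ext_ideal_sub (X I : R -> Prop) (J : L -> Prop) : is_ideal J ->
  (forall x, I x -> ideal_gen X x) -> (forall x, X x -> J (locmap S x)) ->
  forall z, ext_ideal S I z -> J z.
Proof.
move=> HJ IX XJ z; apply: ideal_gen_min => // _ [x /IX Ix ->].
exact: (ideal_gen_min (is_ideal_preim (locmap S : {rmorphism R -> L}) HJ) XJ Ix).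
Qed.

Lemma ext_ideal_eq0P (I : R -> Prop) : (forall z : L, ext_ideal S I z -> z = 0) <->
  forall x, I x -> exists2 u, Smc S u & u * x = 0.
Proof.
split=> [I0 x Ix|H].
  by apply/locmap_eq0; apply: I0; apply: mem_ideal_gen; exists x.
apply: (ext_ideal_sub (X := I) (J := fun z => z = 0)).
- by split=> [//|x y -> ->|a x ->]; rewrite ?addr0 ?mulr0.
- exact: mem_ideal_gen.
- by move=> x /H /locmap_eq0.
Qed.

End Localization.

Definition is_local_ring (T : comPzRingType) : Prop :=
  forall z : T, (exists w, z * w = 1) \/ (exists w, (1 - z) * w = 1).

Lemma local_principal_pair_dvd (T : comPzRingType) (X Y g r1 r2 a b : T) :
  is_local_ring T -> X = r1 * g -> Y = r2 * g -> g = a * X + b * Y ->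
  (exists z, Y = z * X) \/ (exists z, X = z * Y).
Proof.
move=> Tloc EX EY Eg.
have Eg' : g = (a * r1 + b * r2) * g by rewrite {1}Eg EX EY; ring.
case: (Tloc (a * r1 + b * r2)) => [[w Ew]|[w Ew]]; last first.
  have g0 : g = 0.
    have E0 : (1 - (a * r1 + b * r2)) * g = 0 by rewrite mulrBl mul1r -Eg' subrr.
    by rewrite -[g]mul1r -Ew mulrAC E0 mul0r.
  by right; exists 0; rewrite EX g0 !mulr0 mul0r.
case: (Tloc (a * r1 * w)) => [[w' Ew']|[w' Ew']].
  left; exists (r2 * (a * w * w')); rewrite EY EX.
  by rewrite {1}(_ : g = a * r1 * w * w' * g); [ring|rewrite Ew' mul1r].
right; exists (r1 * (b * w * w')); rewrite EX EY.
have E1 : 1 - a * r1 * w = b * r2 * w by rewrite -Ew; ring.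
by rewrite {1}(_ : g = b * r2 * w * w' * g); [ring|rewrite -E1 Ew' mul1r].
Qed.

Section DivisibilityAt.
Variables (R : comPzRingType) (m : R -> Prop).
Implicit Types x y z : R.

Definition dvd_at x y := exists t r, ~ m t /\ t * y = r * x.

Definition chain_at := forall x y, dvd_at x y \/ dvd_at y x.

Hypothesis Hm : maximal_ideal m.

Lemma dvd_at_refl x : dvd_at x x.
Proof. by exists 1, 1; split; [case: Hm|]. Qed.

Lemma dvd_at_trans x y z : dvd_at x y -> dvd_at y z -> dvd_at x z.
Proof.
move=> [t [r [mt E]]] [t' [r' [mt' E']]]; exists (t * t'), (r' * r); split.
  by move=> /(maximal_prime Hm) [].
by rewrite -mulrA E' mulrCA E; ring.
Qed.

Lemma dvd_at_locmapP x y :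
  dvd_at x y <-> exists c, locmap (compl m) y = c * locmap (compl m) x.
Proof.
rewrite locmap_dvdP.
by split=> -[t [r [mt E]]]; exists t, r; split=> //; apply/(Smc_compl _ Hm).
Qed.

Lemma localization_local : is_local_ring (localization (compl m)).
Proof.
move=> z; rewrite -[z]reprK; set p := repr z.
have mden : ~ m (fden p) by apply/(Smc_compl _ Hm); exact: fdenP.
case: (pselect (m (fnum p))) => mnum.
- right; have mdiff : ~ m (fden p - fnum p).
    case: (Hm) => Im _ _ mB; apply: mden.
    by rewrite -(subrK (fnum p) (fden p)); apply: (idealD Im).
  exists (\pi_(localization (compl m)) (mkfrac (fden p) (Smc_mem mdiff))).
  by rewrite pi1 piN piD piM; apply: pi_eq; unfold_frac; ring.
- left; exists (\pi_(localization (compl m)) (mkfrac (fden p) (Smc_mem mnum))).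
  by rewrite pi1 piM; apply: pi_eq; unfold_frac; ring.
Qed.

End DivisibilityAt.

Definition chained (T : comPzRingType) : Prop := forall I J : T -> Prop,
  is_ideal I -> is_ideal J -> (forall x, I x -> J x) \/ (forall x, J x -> I x).

Section ArithmeticalRings.
Variable R : comPzRingType.
Implicit Types m : R -> Prop.

Lemma arithmetical_chain_at : arithmetical R ->
  forall m, maximal_ideal m -> chain_at m.
Proof.
move=> HR m Hm x y.
pose I := ideal_gen (fun z => z \in [:: x; y]).
have fgI : fin_gen I by exists [:: x; y].
have [g Hg] := HR I (ideal_gen_is_ideal _) fgI m Hm.
have locI z : z \in [:: x; y] -> exists r, locmap (compl m) z = r * g.
  by move=> zxy; apply/Hg; apply: mem_ideal_gen; exists z => //; apply: mem_ideal_gen.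
have [r1 E1] := locI x (mem_head _ _).
have [r2 E2] := locI y (mem_last x [:: y]).
pose comb z := exists a b, z = a * locmap (compl m) x + b * locmap (compl m) y.
have Hcomb : is_ideal comb.
  split; first by exists 0, 0; rewrite !mul0r addr0.
  - by move=> _ _ [a [b ->]] [c [d ->]]; exists (a + c), (b + d); ring.
  - by move=> c _ [a [b ->]]; exists (c * a), (c * b); ring.
have [a [b Eg]] : comb g.
  apply: (ext_ideal_sub Hcomb (I := I) (X := fun z => z \in [:: x; y]))
    ((Hg g).2 (mults_id g)) => // z.
  by rewrite !inE => /orP [] /eqP ->; [exists 1, 0|exists 0, 1]; ring.
by case: (local_principal_pair_dvd (localization_local Hm) E1 E2 Eg)
  => /(dvd_at_locmapP Hm); [left|right].
Qed.

Lemma chain_at_seq_dvd m (s : seq R) : maximal_ideal m -> chain_at m ->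
  exists2 g, g = 0 \/ g \in s & {in s, forall y, dvd_at m g y}.
Proof.
move=> Hm Hc; elim: s => [|x s [g g0s gs]]; first by exists 0; [left|].
case: (Hc x g) => [xg|gx].
- exists x; first by right; rewrite mem_head.
  move=> y; rewrite inE => /orP [/eqP ->|ys]; first exact: dvd_at_refl.
  exact: dvd_at_trans xg (gs y ys).
- exists g; first by case: g0s => [|gs']; [left|right; rewrite inE gs' orbT].
  by move=> y; rewrite inE => /orP [/eqP ->|]; [exact: gx|exact: gs].
Qed.

Lemma chain_at_arithmetical :
  (forall m, maximal_ideal m -> chain_at m) -> arithmetical R.
Proof.
move=> Hc I HI [s Hs] m Hm.
have [g g0s gs] := chain_at_seq_dvd s Hm (Hc m Hm).
have Ig : I g by case: g0s => [->|gs']; [exact: ideal0 HI|apply/Hs; exact: mem_ideal_gen].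
exists (locmap (compl m) g) => z; split.
- apply: (ext_ideal_sub (is_ideal_mults _) (X := fun y => y \in s)) => [x /Hs //|x /gs].
  by move/(dvd_at_locmapP Hm).
- move=> [r ->]; apply: (idealMl (ideal_gen_is_ideal _)).
  by apply: mem_ideal_gen; exists g.
Qed.

Lemma chained_chain_at m : maximal_ideal m ->
  chained (localization (compl m)) -> chain_at m.
Proof.
move=> Hm Hc x y.
case: (Hc _ _ (is_ideal_mults (locmap _ x)) (is_ideal_mults (locmap _ y)))
  => /(_ _ (mults_id _)) /(dvd_at_locmapP Hm); by [right|left].
Qed.

Lemma chain_at_chained m : maximal_ideal m -> chain_at m ->
  chained (localization (compl m)).
Proof.
move=> Hm Hc I J HI HJ.
case: (pselect (forall u, I u -> J u)) => [|/existsNP [u /not_implyP [Iu Ju]]].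
  by left.
right=> v Jv; rewrite -[u]reprK in Iu Ju; rewrite -[v]reprK in Jv *.
case: (Hc (fnum (repr u)) (fnum (repr v))) => -[t [r [mt E]]].
- by have [z ->] := pi_dvd (Smc_mem mt) E; apply: (idealMl HI).
- by case: Ju; have [z ->] := pi_dvd (Smc_mem mt) E; apply: (idealMl HJ).
Qed.

End ArithmeticalRings.

Section Amalgamation.
Variables (A B : comPzRingType) (f : {rmorphism A -> B}) (b : ideal_of B).
Local Notation R := (amalgamation f b).
Let hb : is_ideal b := ideal_ofP b.
Implicit Types (X Y : R) (a : A) (c : B).

Definition amalg_fst (X : R) : A := (val X).1.
Definition amalg_snd (X : R) : B := (val X).2.
Arguments amalg_fst : simpl never.
Arguments amalg_snd : simpl never.
Local Notation p1 := amalg_fst.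
Local Notation p2 := amalg_snd.

Fact amalg_fst_is_zmod_morphism : zmod_morphism amalg_fst.
Proof. exact: (rmorphB (fst \o val : {rmorphism R -> A})). Qed.
Fact amalg_fst_is_monoid_morphism : monoid_morphism amalg_fst.
Proof. exact: (rmorphism_monoidP (fst \o val : {rmorphism R -> A})). Qed.
HB.instance Definition _ := GRing.isZmodMorphism.Build R A amalg_fst
  amalg_fst_is_zmod_morphism.
HB.instance Definition _ := GRing.isMonoidMorphism.Build R A amalg_fst
  amalg_fst_is_monoid_morphism.

Fact amalg_snd_is_zmod_morphism : zmod_morphism amalg_snd.
Proof. exact: (rmorphB (snd \o val : {rmorphism R -> B})). Qed.
Fact amalg_snd_is_monoid_morphism : monoid_morphism amalg_snd.
Proof. exact: (rmorphism_monoidP (snd \o val : {rmorphism R -> B})). Qed.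
HB.instance Definition _ := GRing.isZmodMorphism.Build R B amalg_snd
  amalg_snd_is_zmod_morphism.
HB.instance Definition _ := GRing.isMonoidMorphism.Build R B amalg_snd
  amalg_snd_is_monoid_morphism.

Lemma amalg_mem X : b (p2 X - f (p1 X)).
Proof. exact/asboolP/(valP X). Qed.

Lemma amalg_eq X Y : p1 X = p1 Y -> p2 X = p2 Y -> X = Y.
Proof.
move=> E1 E2; apply: val_inj.
by rewrite [val X]surjective_pairing [val Y]surjective_pairing; congr pair.
Qed.

Lemma amalgP_diag a : amalgP f b (a, f a).
Proof. by apply/asboolP; rewrite /= subrr; exact: ideal0 hb. Qed.

Definition inA a : R := Sub (a, f a) (amalgP_diag a).

Lemma amalg_fst_inA a : p1 (inA a) = a. Proof. by []. Qed.
Lemma amalg_snd_inA a : p2 (inA a) = f a. Proof. by []. Qed.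

Lemma inA_is_zmod_morphism : zmod_morphism inA.
Proof.
by move=> a a'; apply: amalg_eq; rewrite rmorphB ?amalg_fst_inA ?amalg_snd_inA ?rmorphB.
Qed.

HB.instance Definition _ := GRing.isZmodMorphism.Build A R inA inA_is_zmod_morphism.

Lemma inA_is_monoid_morphism : monoid_morphism inA.
Proof.
split=> [|a a']; apply: amalg_eq;
  by rewrite ?rmorph1 ?rmorphM ?amalg_fst_inA ?amalg_snd_inA ?rmorph1 ?rmorphM.
Qed.

HB.instance Definition _ := GRing.isMonoidMorphism.Build A R inA inA_is_monoid_morphism.

(* The element [(0, c)]; the junk value [0] is only taken when [c] is outside [b]. *)
Definition inb c : R := insubd 0 (0, c).

Lemma inbE c : b c -> val (inb c) = (0, c).
Proof. by move=> bc; apply: insubdK; apply/asboolP; rewrite /= rmorph0 subr0. Qed.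

Lemma amalg_fst_inb c : b c -> p1 (inb c) = 0.
Proof. by move=> /inbE /(congr1 fst). Qed.

Lemma amalg_snd_inb c : b c -> p2 (inb c) = c.
Proof. by move=> /inbE /(congr1 snd). Qed.

Lemma amalg_decomp X : X = inA (p1 X) + inb (p2 X - f (p1 X)).
Proof.
have bX := amalg_mem X.
apply: amalg_eq; rewrite !rmorphD /= ?amalg_fst_inb ?amalg_snd_inb //.
  by rewrite amalg_fst_inA addr0.
by rewrite amalg_snd_inA addrC subrK.
Qed.

Lemma inb_mulr c X : b c -> inb c * X = inb (c * p2 X).
Proof.
move=> bc; have bcX : b (c * p2 X) by apply: (idealMr hb).
by apply: amalg_eq; rewrite rmorphM /= ?amalg_fst_inb ?amalg_snd_inb ?mul0r.
Qed.

Lemma inb0 : inb 0 = 0.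
Proof.
by apply: amalg_eq; rewrite rmorph0 ?amalg_fst_inb ?amalg_snd_inb //; exact: ideal0 hb.
Qed.

Lemma amalg_mul_decomp U X :
  U * X = U * inA (p1 X) + inb ((p2 X - f (p1 X)) * p2 U).
Proof.
by rewrite {1}[X]amalg_decomp mulrDr [U * inb _]mulrC (inb_mulr U (amalg_mem X)).
Qed.

Lemma inbD c c' : b c -> b c' -> inb (c + c') = inb c + inb c'.
Proof.
move=> bc bc'; have bcc := idealD hb bc bc'.
by apply: amalg_eq; rewrite rmorphD /= ?amalg_fst_inb ?amalg_snd_inb ?addr0.
Qed.

Section MaximalIdeals.
Implicit Types (M : R -> Prop) (m : A -> Prop) (n : B -> Prop).

Lemma maximal_amalg_fst m : maximal_ideal m -> maximal_ideal (fun X => m (p1 X)).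
Proof.
move=> Hm; case: (Hm) => Im m1 _.
apply/maximal_idealP; [exact: is_ideal_preim|by rewrite rmorph1|].
move=> X mX; have [r mr] := (maximal_idealP Im m1).1 Hm _ mX.
by exists (inA r); rewrite rmorphB rmorphM rmorph1 /=.
Qed.

Lemma maximal_amalg_snd n c0 : maximal_ideal n -> b c0 -> ~ n c0 ->
  maximal_ideal (fun X => n (p2 X)).
Proof.
move=> Hn bc0 nc0; case: (Hn) => In n1 _.
have [z nz] := (maximal_idealP In n1).1 Hn _ nc0.
apply/maximal_idealP; [exact: is_ideal_preim|by rewrite rmorph1|].
move=> X nX; have [r nr] := (maximal_idealP In n1).1 Hn _ nX.
have bY : b (z * c0 * r) by apply: (idealMr hb); apply: (idealMl hb).
exists (inb (z * c0 * r)); rewrite rmorphB rmorphM rmorph1 /= amalg_snd_inb //.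
rewrite (_ : 1 - _ = (1 - z * c0) + z * c0 * (1 - r * p2 X)); last by ring.
by apply: (idealD In) => //; apply: (idealMl In).
Qed.

Lemma maximal_contract_fst M : maximal_ideal M -> (forall c, b c -> M (inb c)) ->
  maximal_ideal (fun a => M (inA a)).
Proof.
move=> HM Mb; case: (HM) => IM M1 _.
apply/maximal_idealP; [exact: is_ideal_preim|by rewrite rmorph1|].
move=> a Ma; have [r Mr] := (maximal_idealP IM M1).1 HM _ Ma.
exists (p1 r); have Er := amalg_decomp r.
set r1 := p1 r in Er *; set e := _ - _ in Er.
rewrite rmorphB rmorph1 rmorphM.
rewrite (_ : 1 - _ = (1 - r * inA a) + inb e * inA a); last by rewrite Er; ring.
by apply: (idealD IM) => //; apply: (idealMr IM); apply: Mb; apply: amalg_mem.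
Qed.

Lemma maximal_contract_snd M c0 : maximal_ideal M -> b c0 -> ~ M (inb c0) ->
  maximal_ideal (fun z => M (inb (c0 * z))) /\ ~ M (inb (c0 * c0)).
Proof.
move=> HM bc0 MC; case: (HM) => IM M1 _.
have bc z : b (c0 * z) by apply: (idealMr hb).
have MCX X : M (inb c0 * X) -> M X by move=> /(maximal_prime HM) [].
have inbc0 z : inb c0 * inb (c0 * z) = inb (c0 * (c0 * z)).
  by rewrite inb_mulr ?amalg_snd_inb.
split; last by rewrite -[c0 * c0]mulr1 -mulrA -inbc0 => /MCX; rewrite mulr1.
have InB : is_ideal (fun z => M (inb (c0 * z))).
  split=> [|x y Mx My|a x Mx].
  - by rewrite mulr0 inb0; exact: ideal0 IM.
  - by rewrite mulrDr inbD //; exact: (idealD IM).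
  - apply: MCX; rewrite inbc0 (_ : c0 * _ = c0 * a * (c0 * x)); last by ring.
    by rewrite -[c0 * x](amalg_snd_inb (bc x)) -inb_mulr //; exact: (idealMl IM).
apply/maximal_idealP => //; first by rewrite mulr1.
move=> z Mz; have [r Mr] := (maximal_idealP IM M1).1 HM _ Mz.
exists (p2 r * c0).
suff -> : inb (c0 * (1 - p2 r * c0 * z)) = inb c0 * (1 - r * inb (c0 * z)).
  exact: (idealMl IM).
by rewrite inb_mulr // rmorphB rmorphM rmorph1 /= amalg_snd_inb //; congr inb; ring.
Qed.

End MaximalIdeals.

End Amalgamation.

Section AmalgamationChains.
Variables (A B : comPzRingType) (f : {rmorphism A -> B}) (b : ideal_of B).
Local Notation R := (amalgamation f b).
Local Notation p1 := (@amalg_fst A B f b).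
Local Notation p2 := (@amalg_snd A B f b).
Let hb : is_ideal b := ideal_ofP b.
Implicit Types (X Y : R) (M : R -> Prop) (m : A -> Prop) (n : B -> Prop).

Lemma chain_at_amalg_fst m : chain_at (fun X => m (p1 X)) -> chain_at m.
Proof.
move=> Hc x y; case: (Hc (inA f b x) (inA f b y))
  => -[t [r [mt /(congr1 p1)]]]; rewrite !rmorphM /= => E; [left|right];
  by exists (p1 t), (p1 r).
Qed.

Lemma chain_at_amalg_snd n c0 : maximal_ideal n -> b c0 -> ~ n c0 ->
  chain_at (fun X => n (p2 X)) -> chain_at n.
Proof.
move=> Hn bc0 nc0 Hc x y.
have bc z : b (c0 * z) by apply: (idealMr hb).
have nt t : ~ n (p2 t) -> ~ n (p2 t * c0) by move=> nt' /(maximal_prime Hn) [].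
case: (Hc (inb f b (c0 * x)) (inb f b (c0 * y))) => -[t [r [/nt nt' /(congr1 p2)]]];
  rewrite !rmorphM /= !amalg_snd_inb // !mulrA => E; [left|right];
  by exists (p2 t * c0), (p2 r * c0).
Qed.

Section OverMaximalIdealOfA.
Variable m : A -> Prop.
Hypothesis Hm : maximal_ideal m.

Lemma Sm_f a : ~ m a -> Sm f b m (f a).
Proof. by move=> ma; exists a => //; exists 0; [exact: ideal0 hb|rewrite addr0]. Qed.

Lemma Sm_mul x y : Sm f b m x -> Sm f b m y -> Sm f b m (x * y).
Proof.
move=> [a ma [c bc ->]] [a' ma' [c' bc' ->]].
exists (a * a'); first by move=> /(maximal_prime Hm) [].
exists (f a * c' + c * f a' + c * c'); last by rewrite rmorphM; ring.
apply: (idealD hb); first apply: (idealD hb).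
- exact: (idealMl hb).
- exact: (idealMr hb).
- exact: (idealMr hb).
Qed.

Lemma Smc_Sm u : Smc (Sm f b m) u -> Sm f b m u.
Proof.
apply: Smc_closed; last exact: Sm_mul.
by rewrite -(rmorph1 f); apply: Sm_f; case: Hm.
Qed.

Lemma Sm_amalg_snd X : ~ m (p1 X) -> Sm f b m (p2 X).
Proof.
move=> mX; exists (p1 X) => //; exists (p2 X - f (p1 X)); first exact: amalg_mem.
by rewrite addrC subrK.
Qed.

Lemma amalg_chain_ann c k : chain_at (fun X => m (p1 X)) -> b c -> b (f k) ->
  (exists2 u, Sm f b m u & u * c = 0) \/ (exists2 s, ~ m s & s * k = 0).
Proof.
move=> Hc bc bk; pose d := inA f b k - inb f b (f k).
have d1 : p1 d = k by rewrite rmorphB /= amalg_fst_inb // subr0.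
have d2 : p2 d = 0 by rewrite rmorphB /= amalg_snd_inb // subrr.
case: (Hc d (inb f b c)) => -[t [r [mt E]]].
- left; exists (p2 t); first exact: Sm_amalg_snd.
  by move/(congr1 p2): E; rewrite !rmorphM /= amalg_snd_inb // d2 mulr0.
- right; exists (p1 t) => //.
  by move/(congr1 p1): E; rewrite !rmorphM /= amalg_fst_inb // d1 mulr0.
Qed.

(* Write [c/1 = f(a)/f(s)] and let [u = f v + e] in [S_m] equalize the two
   fractions; then [f (v a)] lies in [b], and if [s'] outside [m] kills [v a],
   then [f (s' v) * u * f s] kills [c]. *)
Lemma Sm_ann_of_surjective : chain_at (fun X => m (p1 X)) ->
  (forall y : localization (Sm f b m),
     exists x : localization (compl m), locind f (compl m) (Sm f b m) x = y) ->
  forall c, b c -> exists2 u, Sm f b m u & u * c = 0.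
Proof.
move=> Hc Hsurj c bc; have [x] := Hsurj (locmap _ c).
set p := repr x; have mden : ~ m (fden p) by apply/(Smc_compl _ Hm); exact: fdenP.
have Sden : Smc (Sm f b m) (f (fden p)) by apply/Smc_mem/Sm_f.
rewrite /locind -/p /insubd (@insubT _ _ (Defs.frac _) (f (fnum p), f (fden p)) Sden) /=.
move=> /pi_eqP [u /Smc_Sm Su].
rewrite /fnum /fden /= => Eu.
have Eu' : u * (c * f (fden p)) = u * f (fnum p).
  by apply/eqP; rewrite eq_sym -subr_eq0 -Eu; apply/eqP; rewrite /fnum /fden; ring.
case: (Su) => v mv [e be Ev].
have bk : b (f (v * fnum p)).
  have -> : f (v * fnum p) = u * c * f (fden p) - e * f (fnum p).
    by rewrite rmorphM -mulrA Eu' Ev; ring.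
  by apply: (idealB hb); [apply: (idealMr hb); apply: (idealMl hb)|apply: (idealMr hb)].
case: (amalg_chain_ann Hc bc bk) => // -[s ms E].
exists (f (s * v) * u * f (fden p)).
  apply: Sm_mul => //; [apply: Sm_mul => //|exact: Sm_f].
  by apply: Sm_f => /(maximal_prime Hm) [].
transitivity (f (s * v) * (u * (c * f (fden p)))); first ring.
rewrite Eu'; transitivity (u * f (s * (v * fnum p))); first by rewrite !rmorphM; ring.
by rewrite E rmorph0 mulr0.
Qed.

Lemma Sm_ann_of_nonzero : chain_at (fun X => m (p1 X)) ->
  ~ (forall y : localization (compl m),
       ext_ideal (compl m) (fun a => b (f a)) y -> y = 0) ->
  forall c, b c -> exists2 u, Sm f b m u & u * c = 0.
Proof.
move=> Hc Hnz c bc; apply: contra_notP Hnz => Hc0; apply/ext_ideal_eq0P => k bk.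
case: (amalg_chain_ann Hc bc bk) => [/Hc0 []|[s ms sk]].
by exists s => //; apply: Smc_mem.
Qed.

End OverMaximalIdealOfA.

(* In the localization [R_M] every element equals its diagonal part [(a, f a)]. *)
Definition loc_diagonal M := forall X, exists2 U, ~ M U & U * X = U * inA f b (p1 X).

Section MaximalContainingB.
Variable M : R -> Prop.
Hypotheses (HM : maximal_ideal M) (Mb : forall c, b c -> M (inb f b c)).

Lemma amalg_mem_fst X : M X -> M (inA f b (p1 X)).
Proof.
move=> MX; case: (HM) => IM _ _.
have -> : inA f b (p1 X) = X - inb f b (p2 X - f (p1 X)).
  by rewrite {2}[X]amalg_decomp addrK.
by apply: (idealB IM) => //; apply/Mb/amalg_mem.
Qed.

Lemma loc_diagonal_of_Sm_ann :
  (forall c, b c -> exists2 u, Sm f b (fun a => M (inA f b a)) u & u * c = 0) ->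
  loc_diagonal M.
Proof.
move=> Hann X; have [u [v mv [e be ->]] Ee] := Hann _ (amalg_mem X).
exists (inA f b v + inb f b e).
  by move/amalg_mem_fst; rewrite [p1 _]rmorphD /= amalg_fst_inb // addr0.
rewrite amalg_mul_decomp [p2 (_ + _)]rmorphD /= amalg_snd_inA amalg_snd_inb //.
by rewrite [_ * (f v + e)]mulrC Ee inb0 addr0.
Qed.

Lemma loc_diagonal_of_preim a0 : b (f a0) -> ~ M (inA f b a0) -> loc_diagonal M.
Proof.
move=> ba0 Ma0 X; exists (inA f b a0 - inb f b (f a0)).
  by move/amalg_mem_fst; rewrite [p1 _]rmorphB /= amalg_fst_inb // subr0.
rewrite amalg_mul_decomp [p2 (_ - _)]rmorphB /= amalg_snd_inA amalg_snd_inb //.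
by rewrite subrr mulr0 inb0 addr0.
Qed.

Lemma dvd_at_amalg_of_fst X Y : loc_diagonal M ->
  dvd_at (fun a => M (inA f b a)) (p1 X) (p1 Y) -> dvd_at M X Y.
Proof.
move=> Hd [s [r [ms E]]]; have [UX MUX EX] := Hd X; have [UY MUY EY] := Hd Y.
exists (inA f b s * UX * UY), (inA f b r * UX * UY); split.
  by move=> /(maximal_prime HM) [/(maximal_prime HM) []|].
transitivity (UX * UY * inA f b (s * p1 Y)).
  by rewrite rmorphM; transitivity (UX * inA f b s * (UY * Y)); [ring|rewrite EY; ring].
rewrite E rmorphM; transitivity (inA f b r * UY * (UX * inA f b (p1 X))); first ring.
by rewrite -EX; ring.
Qed.

End MaximalContainingB.

Lemma dvd_at_amalg_of_snd M c0 X Y : maximal_ideal M -> b c0 -> ~ M (inb f b c0) ->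
  dvd_at (fun z => M (inb f b (c0 * z))) (p2 X) (p2 Y) -> dvd_at M X Y.
Proof.
move=> HM bc0 Mc0 [s [r [ns E]]].
have [HnB nBc0] := maximal_contract_snd HM bc0 Mc0.
have bc z : b (c0 * z) by apply: (idealMr hb).
exists (inb f b (c0 * (c0 * s))), (inb f b (c0 * (c0 * r))); split.
  by move=> /(maximal_prime HnB) [].
by rewrite !inb_mulr // -!mulrA E.
Qed.

Lemma chain_at_amalg :
  (forall m, maximal_ideal m -> chain_at m) ->
  (forall m, maximal_ideal m -> (forall a, b (f a) -> m a) ->
     forall c, b c -> exists2 u, Sm f b m u & u * c = 0) ->
  (forall n, maximal_ideal n -> ~ (forall y, b y -> n y) -> chain_at n) ->
  forall M, maximal_ideal M -> chain_at M.
Proof.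
move=> HA Hb HB M HM X Y.
case: (pselect (forall c, b c -> M (inb f b c))) => [Mb|/existsNP [c0 /not_implyP [bc0 Mc0]]].
- have HmA := maximal_contract_fst HM Mb.
  have Hd : loc_diagonal M.
    case: (pselect (forall a, b (f a) -> M (inA f b a))) => [Hsub|].
      exact: loc_diagonal_of_Sm_ann (Hb _ HmA Hsub).
    by move=> /existsNP [a0 /not_implyP [ba0 Ma0]]; apply: loc_diagonal_of_preim ba0 Ma0.
  by case: (HA _ HmA (p1 X) (p1 Y)) => /(dvd_at_amalg_of_fst HM Hd); [left|right].
- have [HnB nBc0] := maximal_contract_snd HM bc0 Mc0.
  have nBb : ~ (forall y, b y -> M (inb f b (c0 * y))) by move/(_ c0 bc0).
  by case: (HB _ HnB nBb (p2 X) (p2 Y)) => /(dvd_at_amalg_of_snd HM bc0 Mc0); [left|right].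
Qed.

End AmalgamationChains.

Unset Implicit Arguments.
Theorem proposition4p10 (A B : comPzRingType) (f : {rmorphism A -> B})
    (b : ideal_of B) :
  (forall m : A -> Prop, maximal_ideal m -> (forall a, b (f a) -> m a) ->
     (forall y : localization (Sm f b m),
        exists x : localization (compl m), locind f (compl m) (Sm f b m) x = y)
     \/ ~ (forall y : localization (compl m),
             ext_ideal (compl m) (fun a => b (f a)) y -> y = 0)) ->
  (arithmetical (amalgamation f b) <->
   [/\ arithmetical A,
       (forall m : A -> Prop, maximal_ideal m -> (forall a, b (f a) -> m a) ->
          forall y : localization (Sm f b m), ext_ideal (Sm f b m) b y -> y = 0)
     & (forall n : B -> Prop, maximal_ideal n -> ~ (forall y, b y -> n y) ->
          forall I J : localization (compl n) -> Prop, is_ideal I -> is_ideal J ->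
            (forall x, I x -> J x) \/ (forall x, J x -> I x))]).
Proof.
move=> Hyp; split=> [HR|[HA Hb HB]].
  have HRc := arithmetical_chain_at HR.
  have HRfst m : maximal_ideal m -> chain_at (fun X : amalgamation f b => m (amalg_fst X)).
    by move=> Hm; apply: HRc; apply: maximal_amalg_fst.
  split.
  - by apply: chain_at_arithmetical => m Hm; apply: chain_at_amalg_fst (HRfst m Hm).
  - move=> m Hm Hsub; apply/ext_ideal_eq0P => c bc.
    have [u Su uc] : exists2 u, Sm f b m u & u * c = 0.
      case: (Hyp m Hm Hsub) => [Hsurj|Hnz].
        exact: Sm_ann_of_surjective Hm (HRfst m Hm) Hsurj c bc.
      exact: Sm_ann_of_nonzero (HRfst m Hm) Hnz c bc.
    by exists u => //; apply: Smc_mem.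
  - move=> n Hn /existsNP [c0 /not_implyP [bc0 nc0]]; apply: (chain_at_chained Hn).
    exact: chain_at_amalg_snd Hn bc0 nc0 (HRc _ (maximal_amalg_snd f Hn bc0 nc0)).
apply: chain_at_arithmetical; apply: chain_at_amalg.
- exact: arithmetical_chain_at.
- move=> m Hm Hsub c /((ext_ideal_eq0P _ _).1 (Hb m Hm Hsub)) [u Su uc].
  by exists u => //; apply: Smc_Sm.
- by move=> n Hn Hnb; apply: (chained_chain_at Hn (HB n Hn Hnb)).
Qed.
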